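(* Let $\alpha\in\mathbb C$ and $n\ge 1$ be an integer. The matrix $K_n:=A_\alpha^n-T\big((z+z^{-1})^n\big)$ is a (semi-infinite) Hankel matrix, i.e. its $(i,j)$ entry depends only on $i+j$. Moreover, its first column $k_n:=K_ne_1$ satisfies $$k_{n+1}=A_\alpha k_n+\sigma_n e_1,\qquad n\ge 1,$$ where $\sigma_n=\alpha\binom{n}{n/2}$ if $n$ is even and $\sigma_n=-\binom{n}{\lfloor n/2\rfloor}$ if $n$ is odd.
   Context: All matrices are semi-infinite, with rows and columns indexed by the positive integers, and $e_1$ denotes the first column of the semi-infinite identity matrix $I$. For a Laurent polynomial (or Laurent series with absolutely summable coefficients) $a(z)=\sum_{i\in\mathbb Z}a_iz^i$, $T(a)$ denotes the semi-infinite Toeplitz matrix with $(i,j)$ entry $a_{j-i}$. For $\alpha\in\mathbb C$, $A_\alpha:=T(z+z^{-1})+\alpha e_1e_1^T$, i.e. the semi-infinite tridiagonal matrix with ones on the sub- and superdiagonal, $(1,1)$ entry equal to $\alpha$, and zeros elsewhere. *)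

From HB Require Import structures.
From mathcomp Require Import all_boot all_order all_algebra.
From mathcomp Require Import complex.
From mathcomp Require Import reals.
Set Implicit Arguments. Unset Strict Implicit. Unset Printing Implicit Defensive.
Import Order.TTheory GRing.Theory Num.Theory.
Local Open Scope ring_scope.

(* Semi-infinite matrices and vectors.  Indexing is 0-based: the paper's
   row/column index p >= 1 corresponds to index p-1 here. *)
Definition smat (C : Type) := nat -> nat -> C.
Definition svec (C : Type) := nat -> C.

Section Defs.
Variable C : comRingType.

Definition e1 : svec C := fun i => (i == 0)%N%:R.

Definition sid : smat C := fun i j => (i == j)%:R.

(* A_alpha = T(z + z^{-1}) + alpha e1 e1^T *)
Definition Aalpha (alpha : C) : smat C := fun i j =>
  (if (i == 0) && (j == 0) then alpha else 0) +
  ((j == i.+1) || (i == j.+1))%:R.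

(* Product A_alpha * M.  Row i of A_alpha is supported on columns k < i+2,
   so the (a priori infinite) sum over k reduces to this finite sum. *)
Definition Amul (alpha : C) (M : smat C) : smat C := fun i j =>
  \sum_(k < i.+2) Aalpha alpha i k * M k j.

(* A_alpha applied to a vector, same remark *)
Definition Amulv (alpha : C) (v : svec C) : svec C := fun i =>
  \sum_(k < i.+2) Aalpha alpha i k * v k.

Fixpoint Apow (alpha : C) (n : nat) : smat C :=
  match n with
  | 0 => sid
  | n'.+1 => Amul alpha (Apow alpha n')
  end.

(* A Laurent polynomial z^{-s} p(z), with p a polynomial, represented by its
   coefficient function m |-> coefficient of z^m. *)
Definition laurent_coef (p : {poly C}) (s : nat) (m : int) : C :=
  match (m + s%:Z)%R with
  | Posz k => p`_k
  | Negz _ => 0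
  end.

(* (z + z^{-1})^n = z^{-n} (z^2 + 1)^n *)
Definition zpzinv_pow (n : nat) : int -> C :=
  laurent_coef (('X ^+ 2 + 1) ^+ n) n.

Definition toeplitz (a : int -> C) : smat C := fun i j => a (j%:Z - i%:Z).

Definition hankel (M : smat C) : Prop :=
  forall i j i' j', (i + j = i' + j')%N -> M i j = M i' j'.

Definition Kmat (alpha : C) (n : nat) : smat C := fun i j =>
  Apow alpha n i j - toeplitz (zpzinv_pow n) i j.

Definition kvec (alpha : C) (n : nat) : svec C := fun i => Kmat alpha n i 0.

Definition sigma (alpha : C) (n : nat) : C :=
  if odd n then - ('C(n, n./2))%:R else alpha * ('C(n, n./2))%:R.

End Defs.

From HB Require Import structures.
From mathcomp Require Import all_boot all_order all_algebra.
From mathcomp Require Import complex.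
From mathcomp Require Import reals.
From mathcomp Require Import zify ring.
Set Implicit Arguments. Unset Strict Implicit. Unset Printing Implicit Defensive.
Import Order.TTheory GRing.Theory Num.Theory.
Local Open Scope ring_scope.

(* Write a_n(m) for the coefficient of z^m in (z + z^{-1})^n, so that
   a_{n+1}(m) = a_n(m-1) + a_n(m+1).  Away from its first row, A_alpha acts on
   T(a_n) exactly like multiplication by z + z^{-1}; hence
   K_{n+1} = A_alpha K_n + e_1 r_n^T with r_n(j) = alpha a_n(j) - a_n(j+1).
   An induction on n shows that K_n is Hankel, K_n(i,j) = h_n(i+j), provided one
   carries along the relation h_n(j) = alpha h_n(j+1) + r_n(j+1), which is what
   keeps row 0 of A_alpha K_n + e_1 r_n^T aligned with the other rows.  Taking
   j = 0 gives the column recurrence, with sigma_n = r_n(0) read off from the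
   binomial coefficients of (z^2 + 1)^n. *)

Section Recurrence.
Variable C : comNzRingType.

Definition coefz (p : {poly C}) (m : int) : C :=
  if m is Posz k then p`_k else 0.

Lemma coefz_neg p (m : int) : m < 0 -> coefz p m = 0.
Proof. by case: m. Qed.

Lemma coefzMX2D1 p (m : int) :
  coefz (p * ('X^2 + 1)) m = coefz p (m - 2) + coefz p m.
Proof.
case: m => [k|k]; last by rewrite !coefz_neg ?addr0 //; lia.
rewrite /= mulrDr mulr1 coefD coefMXn.
case: ltnP => hk; first by rewrite coefz_neg //; lia.
by have -> : k%:Z - 2 = (k - 2)%N by lia.
Qed.

Lemma coef_X2D1_exp n k :
  (('X^2 + 1) ^+ n : {poly C})`_k = if odd k then 0 else ('C(n, k./2))%:R.
Proof.
elim: n k => [|n IHn] k.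
  by rewrite expr0 coef1; case: k => [|[|k]] //=; rewrite negbK; case: ifP.
rewrite exprSr mulrDr mulr1 coefD coefMXn.
case: k => [|[|k]] /=.
- by rewrite IHn /= !bin0 add0r.
- by rewrite IHn add0r.
- rewrite subn2 /= !IHn /=; case: ifP => _; first by rewrite addr0.
  by rewrite binS natrD addrC.
Qed.

Lemma zpzinv_powE n (m : int) :
  zpzinv_pow C n m = coefz (('X^2 + 1) ^+ n) (m + n).
Proof. by []. Qed.

Lemma zpzinv_powS n (m : int) :
  zpzinv_pow C n.+1 m = zpzinv_pow C n (m - 1) + zpzinv_pow C n (m + 1).
Proof.
rewrite !zpzinv_powE exprSr coefzMX2D1.
by congr (coefz _ _ + coefz _ _); lia.
Qed.

Lemma zpzinv_pow0 (m : int) : zpzinv_pow C 0 m = (m == 0)%:R.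
Proof.
case: m => [k|k]; last by [].
by rewrite zpzinv_powE expr0 addr0 /= coef1.
Qed.

Lemma toeplitz_zpzinv_pow0 i j : toeplitz (zpzinv_pow C 0) i j = sid C i j.
Proof. by rewrite /toeplitz zpzinv_pow0 subr_eq0 eqz_nat eq_sym. Qed.

Lemma AmulE (alpha : C) (M : smat C) i j :
  Amul alpha M i j = (if i is i'.+1 then M i' j else alpha * M 0%N j) + M i.+1 j.
Proof.
rewrite /Amul; case: i => [|i].
  by rewrite !big_ord_recr big_ord0 /= /Aalpha /= !(add0r, addr0, mul1r).
rewrite !big_ord_recr /= big1 => [|k _]; last first.
  have hk := ltn_ord k.
  have k_ne : (k == i.+2 :> nat) = false by apply/negbTE; lia.
  have i_ne : (i.+1 == k.+1) = false by apply/negbTE; lia.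
  by rewrite /Aalpha /= k_ne i_ne add0r mul0r.
rewrite /Aalpha /= !eqxx ?orbT (_ : (i.+1 == i.+2) = false); last by apply/negbTE; lia.
by rewrite /= !add0r mul0r addr0 !mul1r.
Qed.

Variable alpha : C.

Definition rank_one_corr n (m : int) : C :=
  alpha * zpzinv_pow C n m - zpzinv_pow C n (m + 1).

Lemma rank_one_corrS n (m : int) :
  rank_one_corr n.+1 m = rank_one_corr n (m - 1) + rank_one_corr n (m + 1).
Proof.
rewrite /rank_one_corr !zpzinv_powS.
have -> : m - 1 + 1 = m by rewrite subrK.
have -> : m + 1 - 1 = m by rewrite addrK.
ring.
Qed.

Lemma rank_one_corr0 n : rank_one_corr n 0 = sigma alpha n.
Proof.
rewrite /rank_one_corr /sigma add0r !zpzinv_powE add0r.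
rewrite (_ : 1 + n%:Z = n.+1) /= ?coef_X2D1_exp /=; last by lia.
case: ifP => n_odd; last by rewrite subr0.
rewrite mulr0 sub0r -bin_sub; last by rewrite uphalf_half n_odd; lia.
have := odd_double_half n; rewrite n_odd uphalf_half n_odd => n_eq.
by congr (- ('C(_, _))%:R); lia.
Qed.

Lemma Kmat_succ n i j :
  Kmat alpha n.+1 i j =
  Amul alpha (Kmat alpha n) i j + (if i == 0%N then rank_one_corr n j else 0).
Proof.
rewrite /Kmat /= !AmulE /toeplitz /rank_one_corr zpzinv_powS.
case: i => [|i] /=.
  by rewrite subr0; ring.
rewrite (_ : j%:Z - i.+1%:Z - 1 = j%:Z - i.+2%:Z); last by lia.
rewrite (_ : j%:Z - i.+1%:Z + 1 = j%:Z - i%:Z); last by lia.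
ring.
Qed.

Definition hankel_rec (M : smat C) (r : int -> C) :=
  exists h : nat -> C, (forall i j, M i j = h (i + j)%N) /\
                       (forall j, h j = alpha * h j.+1 + r j.+1).

Lemma hankel_rec_step (M M' : smat C) (r r' : int -> C) :
  hankel_rec M r ->
  (forall i j, M' i j = Amul alpha M i j + (if i == 0%N then r j else 0)) ->
  (forall m, r' m = r (m - 1) + r (m + 1)) ->
  hankel_rec M' r'.
Proof.
move=> [h [Mh h_rec]] M'E r'E.
exists (fun m => if m is m'.+1 then h m' + h m'.+2 else alpha * h 0%N + h 1%N + r 0).
split=> [i j|[|j]].
- rewrite M'E AmulE !Mh; case: i => [|i] /=; last by rewrite addr0 Mh !addSn.
  by case: j => [|j] //=; rewrite !add0n add1n (h_rec j); ring.
- rewrite r'E (h_rec 1%N) /=.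
  have -> : 1%:Z - 1 = 0 by [].
  have -> : 1%:Z + 1 = 2%N%:Z by [].
  ring.
- rewrite r'E (h_rec j) (h_rec j.+2).
  have -> : j.+2%:Z - 1 = j.+1%:Z by lia.
  have -> : j.+2%:Z + 1 = j.+3%:Z by lia.
  ring.
Qed.

Lemma Kmat_hankel_rec n : hankel_rec (Kmat alpha n) (rank_one_corr n).
Proof.
elim: n => [|n IHn]; last first.
  exact: hankel_rec_step IHn (Kmat_succ n) (rank_one_corrS n).
exists (fun=> 0); split=> [i j|j].
  by rewrite /Kmat /= toeplitz_zpzinv_pow0 subrr.
rewrite /rank_one_corr (_ : j.+1%:Z + 1 = j.+2%:Z); last by lia.
by rewrite !zpzinv_pow0 /= mulr0 subrr addr0.
Qed.

End Recurrence.

Theorem lemma1 (R : realType) (alpha : R[i]) (n : nat) (hn : (1 <= n)%N) :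
  hankel (Kmat alpha n) /\
  (forall i : nat,
     kvec alpha n.+1 i = Amulv alpha (kvec alpha n) i + sigma alpha n * e1 R[i] i).
Proof.
split.
  have [h [Kh _]] := Kmat_hankel_rec alpha n.
  by move=> i j i' j' ij_eq; rewrite !Kh ij_eq.
move=> i; rewrite /kvec Kmat_succ -rank_one_corr0 /e1.
by case: i => [|i] /=; rewrite ?mulr1 ?mulr0.
Qed.
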